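(* Let $\mathcal{B}$ be a complete boolean algebra and let $\mathcal{M}$ be a $\mathcal{B}$-valued model (with domain $M$) for a relational language $\mathcal{L}$. Assume that $\mathcal{M}$ satisfies the $\kappa$-mixing property for some cardinal $\kappa\ge\min\{|\mathcal{B}|,|M|\}$. Then $\mathcal{M}$ is full.
   Context: A $\mathcal{B}$-valued model $\mathcal{M}$ for a relational language $\mathcal{L}$ consists of a non-empty set $M$, a map $(\sigma,\tau)\mapsto[\![\sigma=\tau]\!]\in\mathcal{B}$, maps $(\sigma_1,\dots,\sigma_n)\mapsto[\![R(\sigma_1,\dots,\sigma_n)]\!]\in\mathcal{B}$ for each $n$-ary relation symbol $R$, and elements $c^{\mathcal{M}}\in M$ for constants, such that $[\![\sigma=\sigma]\!]=1$, $[\![\sigma=\tau]\!]=[\![\tau=\sigma]\!]$, $[\![\sigma=\tau]\!]\wedge[\![\tau=\pi]\!]\le[\![\sigma=\pi]\!]$ and $\bigwedge_i[\![\sigma_i=\tau_i]\!]\wedge[\![R(\vec\sigma)]\!]\le[\![R(\vec\tau)]\!]$. Since $\mathcal{B}$ is complete, sentences with parameters from $M$ get values in $\mathcal{B}$ via $[\![\varphi\wedge\psi]\!]=[\![\varphi]\!]\wedge[\![\psi]\!]$, $[\![\neg\varphi]\!]=\neg[\![\varphi]\!]$, $[\![\exists x\varphi(x)]\!]=\bigvee_{\tau\in M}[\![\varphi(\tau)]\!]$. For an ultrafilter $G$ on $\mathcal{B}$, $\mathcal{M}/_G$ is the Tarski structure on $\{[\sigma]_G\}$, $[\sigma]_G=\{\tau:[\![\tau=\sigma]\!]\in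 G\}$, with $R([\vec\sigma]_G)$ true iff $[\![R(\vec\sigma)]\!]\in G$ and constants $[c^{\mathcal{M}}]_G$. $\mathcal{M}$ is full if for every ultrafilter $G$, every formula $\phi(x_1,\dots,x_n)$ and all $\tau_i\in M$: $\mathcal{M}/_G\models\phi([\tau_1]_G,\dots,[\tau_n]_G)$ iff $[\![\phi(\tau_1,\dots,\tau_n)]\!]\in G$. $\mathcal{M}$ has the $\kappa$-mixing property if for every antichain $A\subseteq\mathcal{B}$ with $|A|\le\kappa$ and every family $\{\tau_a:a\in A\}\subseteq M$ there exists $\tau\in M$ such that $a\le[\![\tau=\tau_a]\!]$ for every $a\in A$. *)

(* Boolean algebras are MathComp's ctbDistrLatticeType
   (complemented distributive lattices with top and bottom). *)
From HB Require Import structures.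
From mathcomp Require Import all_boot all_order.
From Stdlib Require Import ClassicalEpsilon.
Set Implicit Arguments. Unset Strict Implicit. Unset Printing Implicit Defensive.
Import Order.Theory.
Local Open Scope order_scope.

Section CBA.
Context {d : Order.disp_t} {B : ctbDistrLatticeType d}.

Definition is_lub (S : B -> Prop) (s : B) : Prop :=
  (forall b, S b -> b <= s) /\ (forall u, (forall b, S b -> b <= u) -> s <= u).

Definition complete : Prop := forall S : B -> Prop, exists s, is_lub S s.

(* the supremum (a chosen least upper bound; meaningful when B is complete) *)
Definition bsup (S : B -> Prop) : B :=
  epsilon (inhabits (\bot : B)) (fun s => is_lub S s).

Definition ultrafilter (G : B -> Prop) : Prop :=
  [/\ G \top, ~ G \bot,
      (forall a b, G a -> a <= b -> G b),
      (forall a b, G a -> G b -> G (a `&` b)) &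
      (forall a, G a \/ G (Order.compl a))].

Definition antichain (A : B -> Prop) : Prop :=
  (forall a, A a -> a != \bot) /\
  (forall a b, A a -> A b -> a <> b -> a `&` b = \bot).
End CBA.

Record lang := Lang {
  rsym : Type;
  arity : rsym -> nat;
  csym : Type }.

Inductive term (L : lang) : Type :=
  | tvar : nat -> term L
  | tcst : csym L -> term L.

Inductive form (L : lang) : Type :=
  | fEq : term L -> term L -> form L
  | fRel : forall r : rsym L, ('I_(arity r) -> term L) -> form L
  | fAnd : form L -> form L -> form L
  | fNeg : form L -> form L
  | fEx : nat -> form L -> form L.   (* fEx i p  =  exists x_i, p *)

Definition upd {T : Type} (v : nat -> T) (i : nat) (t : T) : nat -> T :=
  fun n => if n == i then t else v n.

Unset Implicit Arguments.
Record bmodel (L : lang) {d : Order.disp_t} (B : ctbDistrLatticeType d) := BModel {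
  bdom : Type;
  bdom_ne : inhabited bdom;
  beq : bdom -> bdom -> B;
  brel : forall r : rsym L, ('I_(arity r) -> bdom) -> B;
  bcst : csym L -> bdom;
  beq_refl : forall s, beq s s = \top;
  beq_sym : forall s t, beq s t = beq t s;
  beq_trans : forall s t p, beq s t `&` beq t p <= beq s p;
  brel_cong : forall (r : rsym L) (s t : 'I_(arity r) -> bdom),
      (\meet_(i < arity r) beq (s i) (t i)) `&` brel r s <= brel r t }.
Arguments bdom {L d B}. Arguments beq {L d B}. Arguments brel {L d B}.
Arguments bcst {L d B}.
Set Implicit Arguments.

Section BVal.
Context {L : lang} {d : Order.disp_t} {B : ctbDistrLatticeType d} (M : bmodel L B).

Definition bterm (v : nat -> bdom M) (t : term L) : bdom M :=
  match t with tvar n => v n | tcst c => bcst M c end.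

Fixpoint bval (v : nat -> bdom M) (phi : form L) : B :=
  match phi with
  | fEq t1 t2 => beq M (bterm v t1) (bterm v t2)
  | fRel r ts => brel M r (fun k => bterm v (ts k))
  | fAnd p q => bval v p `&` bval v q
  | fNeg p => Order.compl (bval v p)
  | fEx i p => bsup (fun b => exists t : bdom M, b = bval (upd v i t) p)
  end.

(* kappa-mixing property, the cardinal kappa represented by a type K *)
Definition mixing (K : Type) : Prop :=
  forall A : B -> Prop, antichain A ->
    (exists f : {a | A a} -> K, injective f) ->
    forall tau : {a | A a} -> bdom M,
      exists t : bdom M, forall a : {a | A a}, proj1_sig a <= beq M t (tau a).
End BVal.
Arguments bterm {L d B} M v t. Arguments bval {L d B} M v phi.
Arguments mixing {L d B} M K.

Unset Implicit Arguments.
Record tstruct (L : lang) := TStruct {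
  tdom : Type;
  trel : forall r : rsym L, ('I_(arity r) -> tdom) -> Prop;
  tcstv : csym L -> tdom }.
Arguments tdom {L}. Arguments trel {L}. Arguments tcstv {L}.
Set Implicit Arguments.

Definition tterm L (S : tstruct L) (v : nat -> tdom S) (t : term L) : tdom S :=
  match t with tvar n => v n | tcst c => tcstv S c end.

Fixpoint tsat L (S : tstruct L) (v : nat -> tdom S) (phi : form L) : Prop :=
  match phi with
  | fEq t1 t2 => tterm v t1 = tterm v t2
  | fRel r ts => trel S r (fun k => tterm v (ts k))
  | fAnd p q => tsat v p /\ tsat v q
  | fNeg p => ~ tsat v p
  | fEx i p => exists t : tdom S, tsat (upd v i t) p
  end.

Section Quot.
Context {L : lang} {d : Order.disp_t} {B : ctbDistrLatticeType d} (M : bmodel L B)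
        (G : B -> Prop).

Definition cls (s : bdom M) : bdom M -> Prop := fun t => G (beq M t s).

Definition qdom : Type := { X : bdom M -> Prop | exists s, X = cls s }.

Definition qcls (s : bdom M) : qdom := exist _ (cls s) (ex_intro _ s erefl).

Definition quot : tstruct L :=
  {| tdom := qdom;
     trel := fun r xs => exists ss : 'I_(arity r) -> bdom M,
                (forall k, xs k = qcls (ss k)) /\ G (brel M r ss);
     tcstv := fun c => qcls (bcst M c) |}.
End Quot.
Arguments cls {L d B} M G s. Arguments qdom {L d B} M G.
Arguments qcls {L d B} M G s. Arguments quot {L d B} M G.

Definition full {L : lang} {d : Order.disp_t} {B : ctbDistrLatticeType d}
  (M : bmodel L B) : Prop :=
  forall G : B -> Prop, ultrafilter G ->
  forall (phi : form L) (v : nat -> bdom M),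
    tsat (S := quot M G) (fun n => qcls M G (v n)) phi <-> G (bval M v phi).

From mathcomp Require Import all_boot all_order.
From Stdlib Require Import ClassicalEpsilon Classical FunctionalExtensionality PropExtensionality ProofIrrelevance.
From mathcomp Require classical_sets.
Set Implicit Arguments. Unset Strict Implicit. Unset Printing Implicit Defensive.
Import Order.Theory.
Local Open Scope order_scope.

(* Los's theorem for M/G goes through by induction on formulas as soon as M
   satisfies the maximum principle: every [[exists x, phi]] is attained as
   [[phi(t)]] for some t.  The maximum principle comes from mixing: take (Zorn)
   a maximal antichain A of elements each lying below some [[phi(s_a)]]; mixing
   the s_a along A yields t with A below [[phi(t)]], and maximality of A then
   forces every [[phi(s)]] below [[phi(t)]].  Mixing is only granted for
   antichains of size at most kappa, so A is first coarsened by joining each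
   fibre of a |-> s_a: the nonzero fibre joins form an antichain that injects
   both into B and into M. *)

Section BooleanAlgebra.
Context {d : Order.disp_t} {B : ctbDistrLatticeType d}.
Implicit Types (a b c u x y : B) (S : B -> Prop).

Lemma leI_residual a b c : (a `&` b <= c) = (b <= ~` a `|` c).
Proof. by rewrite meetC -[a in LHS]complK -diffE leBLR. Qed.

Lemma leI_compl a x y : a `&` y <= x -> a `&` ~` x <= ~` y.
Proof. by rewrite lexC complI complK -leI_residual. Qed.

Lemma meet_diff_eq0 x y z : x <= y -> x `&` (z `\` y) = \bot.
Proof. by move=> le_xy; apply/eqP; rewrite -lex0 -(diffKI z y) leI2. Qed.

Section Bsup.
Hypothesis cB : complete (B := B).
Variable S : B -> Prop.

Lemma bsup_lub : is_lub S (bsup S).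
Proof. exact: (epsilon_spec (inhabits \bot) (is_lub S)). Qed.

Lemma le_bsup b : S b -> b <= bsup S.
Proof. by case: bsup_lub => + _; apply. Qed.

Lemma bsup_le u : (forall b, S b -> b <= u) -> bsup S <= u.
Proof. by case: bsup_lub => _; apply. Qed.

Lemma meet_bsup_le c u : (forall b, S b -> c `&` b <= u) -> c `&` bsup S <= u.
Proof. by move=> leSu; rewrite leI_residual; apply: bsup_le => b /leSu; rewrite leI_residual. Qed.
End Bsup.

Lemma ex_maximal_antichain (Q : B -> Prop) :
  exists A, [/\ antichain A, (forall a, A a -> Q a) &
    forall c, c != \bot -> Q c -> (forall a, A a -> a `&` c = \bot) -> A c].
Proof.
pose P A := antichain A /\ forall a, A a -> Q a.
have [|A [[[A_ne A_disj] AQ] A_max]] := @classical_sets.Zorn_bigcup B P.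
  move=> F FP F_chain; split; [split|].
  - by move=> a [X /FP [[X_ne _] _]]; apply: X_ne.
  - move=> a b [X FX Xa] [Y FY Yb].
    have [XY|YX] := F_chain X Y FX FY.
      by case: (FP Y FY) => [[_ Y_disj] _]; apply: Y_disj => //; apply: XY.
    by case: (FP X FX) => [[_ X_disj] _]; apply: X_disj => //; apply: YX.
  - by move=> a [X /FP [_ XQ]]; apply: XQ.
exists A; split=> // c c_ne Qc A_c_disj; apply: NNPP => Anc.
apply: (A_max (fun b => A b \/ b = c)); first split.
- by move=> a Aa; left.
- by move=> /(_ c (or_intror erefl)).
split; [split|].
- by move=> a [/A_ne|->].
- move=> a b [Aa|->] [Ab|->] ab //; first exact: A_disj.
    exact: A_c_disj.
  by rewrite meetC; apply: A_c_disj.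
- by move=> a [/AQ|->].
Qed.
End BooleanAlgebra.

Section Ultrafilter.
Context {d : Order.disp_t} {B : ctbDistrLatticeType d} {G : B -> Prop}.
Hypothesis UG : ultrafilter G.

Lemma ultrafilter_le a b : G a -> a <= b -> G b.
Proof. by case: UG => _ _ G_up _ _; apply: G_up. Qed.

Lemma ultrafilter_meet a b : G (a `&` b) <-> G a /\ G b.
Proof.
case: UG => _ _ _ G_meet _; split; last by case; apply: G_meet.
by move=> Gab; split; apply: ultrafilter_le Gab _; rewrite ?leIl ?leIr.
Qed.

Lemma ultrafilter_compl a : G (~` a) <-> ~ G a.
Proof.
case: UG => _ G_bot _ _ G_ult; split; last by case: (G_ult a).
by move=> Gca Ga; apply: G_bot; rewrite -(meetxC a); apply/ultrafilter_meet.
Qed.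

Lemma ultrafilter_bigmeet n (F : 'I_n -> B) : (forall i, G (F i)) -> G (\meet_(i < n) F i).
Proof.
case: UG => G_top _ _ G_meet _ GF.
by apply: (big_ind G) => // x y Gx Gy; apply: G_meet.
Qed.
End Ultrafilter.

Arguments bdom_ne {L d B} b.
Arguments beq_refl {L d B} b s.
Arguments beq_sym {L d B} b s t.
Arguments beq_trans {L d B} b s t p.
Arguments brel_cong {L d B} b r s t.

Section BooleanValuedModel.
Context {L : lang} {d : Order.disp_t} {B : ctbDistrLatticeType d} (M : bmodel L B).
Implicit Types (v w : nat -> bdom M) (s t : bdom M) (c : B).

Lemma beq_le_trans s t u c : c <= beq M s t -> c <= beq M t u -> c <= beq M s u.
Proof. by move=> cst ctu; apply: le_trans _ (beq_trans M s t u); rewrite lexI cst ctu. Qed.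

Lemma bterm_cong v w c tm :
  (forall n, c <= beq M (v n) (w n)) -> c <= beq M (bterm M v tm) (bterm M w tm).
Proof. by case: tm => [n|k] /= vw //; rewrite beq_refl lex1. Qed.

Lemma upd_cong v w i s t c :
  (forall n, c <= beq M (v n) (w n)) -> c <= beq M s t ->
  forall n, c <= beq M (upd v i s n) (upd w i t n).
Proof. by move=> vw st n; rewrite /upd; case: (n == i). Qed.

Lemma bval_cong : complete (B := B) -> forall phi v w c,
  (forall n, c <= beq M (v n) (w n)) -> c `&` bval M v phi <= bval M w phi.
Proof.
move=> cB; elim=> [t1 t2|r ts|p IHp q IHq|p IHp|i p IHp] v w c vw /=.
- have w1v1 : c `&` beq M (bterm M v t1) (bterm M v t2) <= beq M (bterm M w t1) (bterm M v t1).
    by apply: leIxl; rewrite beq_sym; apply: bterm_cong.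
  apply: beq_le_trans w1v1 _; apply: beq_le_trans (leIr _ _) _.
  by apply: leIxl; apply: bterm_cong.
- apply: le_trans _ (brel_cong M r _ _); apply: leI2 => //.
  by apply: meets_ge => k _; apply: bterm_cong.
- rewrite lexI (le_trans _ (IHp v w c vw)) ?(le_trans _ (IHq v w c vw)) //.
    by rewrite leI2 ?leIr.
  by rewrite leI2 ?leIl.
- by apply/leI_compl/IHp => n; rewrite beq_sym.
- apply: meet_bsup_le => // _ [t ->].
  have le_t : bval M (upd w i t) p <= bval M w (fEx i p) by apply: le_bsup => //; exists t.
  by apply: le_trans le_t; apply/IHp/upd_cong; rewrite ?beq_refl ?lex1.
Qed.

Definition full_mixing : Prop :=
  forall A : B -> Prop, antichain A -> forall tau : B -> bdom M,
    exists t, forall a, A a -> a <= beq M t (tau a).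

Definition maximum_principle : Prop :=
  forall v i phi, exists t, bval M v (fEx i phi) = bval M (upd v i t) phi.
End BooleanValuedModel.

Section Quotient.
Context {L : lang} {d : Order.disp_t} {B : ctbDistrLatticeType d} (M : bmodel L B).
Variable G : B -> Prop.
Hypothesis UG : ultrafilter G.
Implicit Types (v : nat -> bdom M) (s t : bdom M).

Lemma qdom_eq (x y : qdom M G) : proj1_sig x = proj1_sig y -> x = y.
Proof. by case: x y => [X pX] [Y pY] /=; apply: subset_eq_compat. Qed.

Lemma qcls_eq s t : qcls M G s = qcls M G t <-> G (beq M s t).
Proof.
split=> [/(f_equal (@proj1_sig _ _)) /= cls_st | Gst].
  have : cls M G s s by rewrite /cls beq_refl; case: UG.
  by rewrite cls_st.
apply/qdom_eq/functional_extensionality => u /=.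
apply: propositional_extensionality; rewrite /cls; split=> Gu.
  by apply: (ultrafilter_le UG) (beq_trans M u s t); apply/(ultrafilter_meet UG).
apply: (ultrafilter_le UG) (beq_trans M u t s).
by apply/(ultrafilter_meet UG); split; rewrite // beq_sym.
Qed.

Lemma qcls_surj (x : qdom M G) : exists s, x = qcls M G s.
Proof. by case: x => X [s defX]; exists s; apply: qdom_eq. Qed.

Lemma tterm_qcls v tm :
  tterm (S := quot M G) (fun n => qcls M G (v n)) tm = qcls M G (bterm M v tm).
Proof. by case: tm. Qed.

Lemma qcls_upd v i s :
  (fun n => qcls M G (upd v i s n)) = upd (fun n => qcls M G (v n)) i (qcls M G s).
Proof. by apply: functional_extensionality => n; rewrite /upd; case: (n == i). Qed.

Lemma ultrafilter_brel r (ss ts : 'I_(arity r) -> bdom M) :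
  (forall k, G (beq M (ss k) (ts k))) -> G (brel M r ss) -> G (brel M r ts).
Proof.
move=> Gst Gs; apply: (ultrafilter_le UG) (brel_cong M r ss ts).
by apply/(ultrafilter_meet UG); split=> //; apply: ultrafilter_bigmeet.
Qed.
End Quotient.

Theorem full_of_maximum_principle {L : lang} {d : Order.disp_t} {B : ctbDistrLatticeType d}
  (M : bmodel L B) : complete (B := B) -> maximum_principle M -> full M.
Proof.
move=> cB maxM G UG; elim=> [t1 t2|r ts|p IHp q IHq|p IHp|i p IHp] v /=.
- by rewrite !tterm_qcls; apply: qcls_eq.
- split=> [[ss [defv Gss]] | Gv].
    apply: (ultrafilter_brel UG) Gss => k; rewrite beq_sym.
    by apply/(qcls_eq UG); rewrite -defv tterm_qcls.
  by exists (fun k => bterm M v (ts k)); split=> // k; rewrite tterm_qcls.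
- by rewrite (ultrafilter_meet UG) IHp IHq.
- by rewrite (ultrafilter_compl UG) IHp.
- have [t max_t] := maxM v i p; rewrite -/(bval M v (fEx i p)) max_t.
  split=> [[x] | Gt]; last by exists (qcls M G t); rewrite -qcls_upd IHp.
  have [s ->] := qcls_surj x; rewrite -qcls_upd IHp => Gs.
  by apply: (ultrafilter_le UG) Gs _; rewrite -max_t; apply: le_bsup => //; exists s.
Qed.

Section FiberSup.
Context {L : lang} {d : Order.disp_t} {B : ctbDistrLatticeType d} (M : bmodel L B).
Hypothesis cB : complete (B := B).
Variables (A : B -> Prop) (tau : B -> bdom M).
Hypothesis antiA : antichain A.

Definition fiber_sup (m : bdom M) : B := bsup (fun a => A a /\ tau a = m).

Lemma le_fiber_sup a : A a -> a <= fiber_sup (tau a).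
Proof. by move=> Aa; apply: le_bsup. Qed.

Lemma fiber_supI m m' : m <> m' -> fiber_sup m `&` fiber_sup m' = \bot.
Proof.
case: antiA => _ A_disj mm'; apply/eqP; rewrite -lex0.
apply: meet_bsup_le => // a' [Aa' tau_a']; rewrite meetC.
apply: meet_bsup_le => // a [Aa tau_a]; rewrite A_disj // => aa'.
by apply: mm'; rewrite -tau_a -tau_a' aa'.
Qed.

Lemma fiber_sup_inj m m' :
  fiber_sup m != \bot -> fiber_sup m = fiber_sup m' -> m = m'.
Proof.
move=> nz_m eq_mm'; apply: NNPP => /fiber_supI.
by rewrite -eq_mm' meetxx; apply/eqP.
Qed.

Lemma antichain_fiber_sups :
  antichain (fun b => b != \bot /\ exists m, b = fiber_sup m).
Proof.
split=> [b [] //|b b' [_ [m ->]] [_ [m' ->]] bb'].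
by apply: fiber_supI => mm'; apply: bb'; rewrite mm'.
Qed.
End FiberSup.

Lemma full_mixing_of_mixing {L : lang} {d : Order.disp_t} {B : ctbDistrLatticeType d}
  (M : bmodel L B) (K : Type) :
  complete (B := B) ->
  ((exists f : B -> K, injective f) \/ (exists f : bdom M -> K, injective f)) ->
  mixing M K -> full_mixing M.
Proof.
move=> cB HK mixM A antiA tau.
pose F b := b != \bot /\ exists m, b = fiber_sup A tau m.
pose g (b : {b | F b}) := epsilon (bdom_ne M) (fun m => proj1_sig b = fiber_sup A tau m).
have def_g b : proj1_sig b = fiber_sup A tau (g b).
  exact: (epsilon_spec (bdom_ne M) _ (proj2 (proj2_sig b))).
have val_inj : injective (@proj1_sig B F).
  by case=> [b Fb] [b' Fb'] /=; apply: subset_eq_compat.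
have g_inj : injective g by move=> b b' gbb'; apply: val_inj; rewrite !def_g gbb'.
have injK : exists h : {b | F b} -> K, injective h.
  case: HK => [[h h_inj]|[h h_inj]].
    by exists (fun b => h (proj1_sig b)) => b b' /h_inj; apply: val_inj.
  by exists (fun b => h (g b)) => b b' /h_inj; apply: g_inj.
have [t t_mix] := mixM F (antichain_fiber_sups cB tau antiA) injK g.
exists t => a Aa; have le_a := le_fiber_sup cB tau Aa.
have Fa : F (fiber_sup A tau (tau a)).
  split; last by exists (tau a).
  by apply: contra (proj1 antiA a Aa) => /eqP fib0; rewrite -lex0 -fib0.
have g_a : tau a = g (exist _ _ Fa).
  exact: (fiber_sup_inj cB antiA (proj1 Fa) (def_g (exist _ _ Fa))).
by apply: le_trans le_a _; rewrite [X in beq M t X]g_a; exact: (t_mix (exist _ _ Fa)).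
Qed.

Section MaximumPrinciple.
Context {L : lang} {d : Order.disp_t} {B : ctbDistrLatticeType d} (M : bmodel L B).
Hypotheses (cB : complete (B := B)) (mixM : full_mixing M).

Lemma ex_maximum (f : bdom M -> B) :
  (forall s t, beq M s t `&` f t <= f s) -> exists t, forall s, f s <= f t.
Proof.
move=> f_cong.
have [A [antiA A_below A_max]] := ex_maximal_antichain (fun a => exists s, a <= f s).
pose tau a := epsilon (bdom_ne M) (fun s => a <= f s).
have le_tau a : A a -> a <= f (tau a).
  by move=> /A_below; apply: (epsilon_spec (bdom_ne M) (fun s => a <= f s)).
have [t t_mix] := mixM antiA tau.
have A_le_t a : A a -> a <= f t.
  by move=> Aa; apply: le_trans _ (f_cong t (tau a)); rewrite lexI t_mix ?le_tau.
exists t => s; rewrite -diff_eq0; apply: contraT => nz_c.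
have A_c : A (f s `\` f t).
  apply: A_max nz_c _ _; first by exists s; rewrite leBx.
  by move=> a /A_le_t /meet_diff_eq0.
have := meet_diff_eq0 (f s) (A_le_t _ A_c); rewrite meetxx => c0.
by rewrite c0 eqxx in nz_c.
Qed.

Lemma maximum_principle_of_full_mixing : maximum_principle M.
Proof.
move=> v i p.
have [t max_t] : exists t, forall s, bval M (upd v i s) p <= bval M (upd v i t) p.
  apply: ex_maximum => s t; apply: bval_cong => //.
  by apply: upd_cong => [n|]; rewrite ?beq_refl ?lex1 // beq_sym.
exists t; apply/le_anti/andP; split; first by apply: bsup_le => // _ [s ->].
by apply: le_bsup => //; exists t.
Qed.
End MaximumPrinciple.

Theorem mainTheorem3 (L : lang) (d : Order.disp_t) (B : ctbDistrLatticeType d)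
  (M : bmodel L B) (K : Type) :
  complete (B := B) ->
  ((exists f : B -> K, injective f) \/ (exists f : bdom M -> K, injective f)) ->
  mixing M K ->
  full M.
Proof.
move=> cB HK mixM; apply: full_of_maximum_principle => //.
exact/maximum_principle_of_full_mixing/(full_mixing_of_mixing cB HK mixM).
Qed.
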